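(* Let $E$ be a nonempty bounded subset of $M_a$ and $p\in E$, and let positive reals $r_0,r_1,r_2,\dots$ be fixed with $E\subset \mathrm{GS}^n(E,p)\cap B_{r_n}(p)$ for every $n\ge0$. Then: (i) $\mathrm{GS}^n(E,p)-p$ is a real vector space for each $n\in\mathbb N$; (ii) $\mathrm{GS}^{n-1}(E,p)\subset\mathrm{GS}^n(E,p)$ for each $n\in\mathbb N$; (iii) $\mathrm{GS}^2(E,p)=\overline{\mathrm{GS}(E,p)}$, the closure of $\mathrm{GS}(E,p)$ in $M_a$; (iv) $\Lambda(\mathrm{GS}^n(E,p))=\Lambda(\mathrm{GS}^n(E,p)\cap B_{r_n}(p))$ for all $n\in\mathbb N$.
   Context: Let $a=\{a_i\}$ be a sequence of positive reals with $\sum_i a_i^2<\infty$, $M_a=\{x\in\mathbb{R}^{\mathbb N}:\sum_i a_i^2x_i^2<\infty\}$ with inner product $\langle x,y\rangle_a=\sum_i a_i^2x_iy_i$ and norm $\|\cdot\|_a$; $B_r(x)=\{y\in M_a:\|y-x\|_a<r\}$. $e_i$ denotes the sequence with $1$ in position $i$ and $0$ elsewhere. For nonempty $A\subset M_a$, $\Lambda(A)$ is the set of $i\in\mathbb N$ for which there exist $x\in A$ and $\alpha\ne0$ with $x+\alpha e_i\in A$. For $p\in A\subset M_a$, $\mathrm{GS}(A,p)=\{p+\sum_i\alpha_i(x_i-p)\in M_a: x_i\in A,\ \alpha_i\in\mathbb R\}$, the index running over a finite or countable subset of $\mathbb N$ and infinite sums being $\|\cdot\|_a$-limits of partial sums.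 Iterates: $\mathrm{GS}^0(E,p)=E$ and $\mathrm{GS}^n(E,p)=\mathrm{GS}\big(\mathrm{GS}^{n-1}(E,p)\cap B_{r_{n-1}}(p),\,p\big)$ for $n\in\mathbb N$. *)

From Stdlib Require Import Reals.
From Coquelicot Require Import Coquelicot.
Open Scope R_scope.

Definition seqR := nat -> R.
Definition setR := seqR -> Prop.

Definition inMa (a : seqR) (x : seqR) : Prop :=
  ex_series (fun i => (a i)^2 * (x i)^2).

Definition norm_a (a : seqR) (x : seqR) : R :=
  sqrt (Series (fun i => (a i)^2 * (x i)^2)).

Definition sub_seq (x y : seqR) : seqR := fun i => x i - y i.

Definition ball_a (a : seqR) (x : seqR) (r : R) : setR :=
  fun y => inMa a y /\ norm_a a (sub_seq y x) < r.

Definition inter (A B : setR) : setR := fun x => A x /\ B x.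
Definition subset (A B : setR) : Prop := forall x, A x -> B x.
Definition set_eq (A B : setR) : Prop := forall x, A x <-> B x.

Definition e_ (i : nat) : seqR := fun j => if Nat.eqb j i then 1 else 0.

Definition Lambda (A : setR) : nat -> Prop :=
  fun i => exists x alpha, A x /\ alpha <> 0 /\ A (fun j => x j + alpha * e_ i j).

Fixpoint psum (f : nat -> R) (N : nat) : R :=
  match N with O => 0 | S m => psum f m + f m end.

Definition comb (p : seqR) (x : nat -> seqR) (alpha : nat -> R) (N : nat) : seqR :=
  fun j => p j + psum (fun k => alpha k * (x k j - p j)) N.

Definition GS (a : seqR) (A : setR) (p : seqR) : setR :=
  fun y => inMa a y /\
    ((exists (N : nat) (x : nat -> seqR) (alpha : nat -> R),
        (forall k, (k < N)%nat -> A (x k)) /\ y = comb p x alpha N)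
     \/
     (exists (x : nat -> seqR) (alpha : nat -> R),
        (forall k, A (x k)) /\
        is_lim_seq (fun N => norm_a a (sub_seq (comb p x alpha N) y)) 0)).

Fixpoint GSn (a : seqR) (E : setR) (p : seqR) (r : nat -> R) (n : nat) : setR :=
  match n with
  | O => E
  | S m => GS a (inter (GSn a E p r m) (ball_a a p (r m))) p
  end.

Definition translate_is_subspace (A : setR) (p : seqR) : Prop :=
  let S := fun v => exists x, A x /\ v = sub_seq x p in
  S (fun _ => 0) /\
  (forall u v, S u -> S v -> S (fun j => u j + v j)) /\
  (forall (c : R) u, S u -> S (fun j => c * u j)).

Definition closure_a (a : seqR) (A : setR) : setR :=
  fun y => inMa a y /\ forall eps, 0 < eps -> exists z, A z /\ norm_a a (sub_seq z y) < eps.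

From Stdlib Require Import Reals Lra Lia.
From Stdlib Require Import FunctionalExtensionality PropExtensionality IndefiniteDescription.
From Coquelicot Require Import Coquelicot.
Open Scope R_scope.

(* For A in M_a containing p, GS(A,p) - p is a linear space: rescaling about p multiplies
   the coefficients, and the sum of two representing series is represented by interleaving
   their terms.  Hence GS(A,p) is stable under homotheties centred at p, and every point of
   it is a multiple of a point in any ball B_rho(p); this gives (i), (ii) and (iv).  For (iii),
   the partial sums of a point of GS(GS(A,p) ∩ B_rho(p), p) lie in GS(A,p); conversely, if
   z_k in GS(A,p) tends to y, then y - p is the telescoping series of the increments
   z_k - z_(k-1), each rescaled into the ball with the scale moved into its coefficient. *)

Lemma mem_ext (P : setR) (u v : seqR) : (forall j, u j = v j) -> P u -> P v.
Proof. intros h; replace v with u by (apply functional_extensionality; exact h); trivial. Qed.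

Lemma inter_eq_l (A B : setR) : subset A B -> inter A B = A.
Proof.
  intros hAB; apply functional_extensionality; intro x; apply propositional_extensionality.
  unfold inter; split; [tauto | auto].
Qed.

Lemma ex_series_lincomb (u v : nat -> R) (c d : R) :
  ex_series u -> ex_series v -> ex_series (fun i => c * u i + d * v i).
Proof.
  intros hu hv.
  apply (@ex_series_plus R_AbsRing R_NormedModule (fun i => c * u i) (fun i => d * v i));
    now apply (@ex_series_scal_l R_AbsRing R_NormedModule).
Qed.

Lemma inMa_lincomb (a u v : seqR) (c d : R) :
  inMa a u -> inMa a v -> inMa a (fun i => c * u i + d * v i).
Proof.
  intros hu hv.
  apply (@ex_series_le R_AbsRing R_CompleteNormedModule _
     (fun i => (2 * c ^ 2) * (a i ^ 2 * u i ^ 2) + (2 * d ^ 2) * (a i ^ 2 * v i ^ 2))).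
  - intro i; change (Rabs (a i ^ 2 * (c * u i + d * v i) ^ 2)
      <= 2 * c ^ 2 * (a i ^ 2 * u i ^ 2) + 2 * d ^ 2 * (a i ^ 2 * v i ^ 2)).
    pose proof (pow2_ge_0 (a i)); pose proof (pow2_ge_0 (c * u i - d * v i)).
    rewrite Rabs_pos_eq by (apply Rmult_le_pos; apply pow2_ge_0).
    nra.
  - now apply ex_series_lincomb.
Qed.

Lemma inMa_sub (a u v : seqR) : inMa a u -> inMa a v -> inMa a (sub_seq u v).
Proof.
  intros hu hv; apply (mem_ext _ (fun j => 1 * u j + (-1) * v j)).
  - intro j; unfold sub_seq; ring.
  - now apply inMa_lincomb.
Qed.

Lemma Series_zero : Series (fun _ : nat => 0) = 0.
Proof. rewrite (Series_ext _ (fun _ => 0 * 0)) by (intros; ring). rewrite Series_scal_l. ring. Qed.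

Lemma inMa_Series_ge_0 (a u : seqR) : inMa a u -> 0 <= Series (fun i => a i ^ 2 * u i ^ 2).
Proof.
  intro hu; rewrite <- Series_zero; apply Series_le; trivial.
  intro i; split; [lra | apply Rmult_le_pos; apply pow2_ge_0].
Qed.

Lemma norm_a_ge_0 (a u : seqR) : 0 <= norm_a a u.
Proof. apply sqrt_pos. Qed.

Lemma norm_a_sub_diag (a u : seqR) : norm_a a (sub_seq u u) = 0.
Proof.
  unfold norm_a, sub_seq.
  rewrite (Series_ext _ (fun _ => 0)) by (intros; simpl; ring).
  now rewrite Series_zero, sqrt_0.
Qed.

Lemma norm_a_scal (a u : seqR) (c : R) : norm_a a (fun i => c * u i) = Rabs c * norm_a a u.
Proof.
  unfold norm_a.
  rewrite (Series_ext _ (fun i => c ^ 2 * (a i ^ 2 * u i ^ 2))) by (intros; ring).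
  rewrite Series_scal_l, sqrt_mult_alt, <- sqrt_Rsqr_abs by nra.
  unfold Rsqr; do 2 f_equal; ring.
Qed.

Lemma norm_a_add_le (a u v : seqR) : inMa a u -> inMa a v ->
  norm_a a (fun i => u i + v i) <= 2 * (norm_a a u + norm_a a v).
Proof.
  intros hu hv; unfold norm_a.
  assert (hsum : Series (fun i => a i ^ 2 * (u i + v i) ^ 2)
      <= 2 * Series (fun i => a i ^ 2 * u i ^ 2) + 2 * Series (fun i => a i ^ 2 * v i ^ 2)).
  { rewrite <- !Series_scal_l, <- Series_plus.
    - apply Series_le; [| now apply ex_series_lincomb].
      intro i; pose proof (pow2_ge_0 (a i)); pose proof (pow2_ge_0 (u i - v i)).
      split; [apply Rmult_le_pos; apply pow2_ge_0 | nra].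
    - now apply (@ex_series_scal_l R_AbsRing R_NormedModule).
    - now apply (@ex_series_scal_l R_AbsRing R_NormedModule). }
  pose proof (inMa_Series_ge_0 a u hu) as hX; pose proof (inMa_Series_ge_0 a v hv) as hY.
  set (X := Series (fun i => a i ^ 2 * u i ^ 2)) in *.
  set (Y := Series (fun i => a i ^ 2 * v i ^ 2)) in *.
  apply Rle_trans with (sqrt (2 * X + 2 * Y)); [now apply sqrt_le_1_alt |].
  pose proof (sqrt_pos X); pose proof (sqrt_pos Y).
  pose proof (sqrt_sqrt X hX); pose proof (sqrt_sqrt Y hY).
  rewrite <- (sqrt_pow2 (2 * (sqrt X + sqrt Y))) by lra.
  apply sqrt_le_1_alt; nra.
Qed.

Definition homothety (p : seqR) (t : R) (y : seqR) : seqR := fun j => p j + t * (y j - p j).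

Lemma inMa_homothety (a p y : seqR) (t : R) : inMa a p -> inMa a y -> inMa a (homothety p t y).
Proof.
  intros hp hy; apply (mem_ext _ (fun j => (1 - t) * p j + t * y j)).
  - intro j; unfold homothety; ring.
  - now apply inMa_lincomb.
Qed.

Lemma norm_a_homothety (a p y : seqR) (t : R) :
  norm_a a (sub_seq (homothety p t y) p) = Rabs t * norm_a a (sub_seq y p).
Proof.
  rewrite <- norm_a_scal; f_equal.
  apply functional_extensionality; intro j; unfold sub_seq, homothety; ring.
Qed.

Lemma psum_ext (f g : nat -> R) (N : nat) :
  (forall k, (k < N)%nat -> f k = g k) -> psum f N = psum g N.
Proof.
  induction N as [| N IH]; intros hfg; simpl; trivial.
  rewrite IH by (intros; apply hfg; lia).
  now rewrite hfg by lia.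
Qed.

Lemma psum_scal (c : R) (f : nat -> R) (N : nat) : psum (fun k => c * f k) N = c * psum f N.
Proof. induction N as [| N IH]; simpl; [| rewrite IH]; ring. Qed.

Lemma psum_telescope (u : nat -> R) (N : nat) : psum (fun k => u (S k) - u k) N = u N - u O.
Proof. induction N as [| N IH]; simpl; [| rewrite IH]; ring. Qed.

Definition interleave {T : Type} (f g : nat -> T) (k : nat) : T :=
  if Nat.even k then f (Nat.div2 k) else g (Nat.div2 k).

Lemma psum_interleave (f g : nat -> R) (N : nat) :
  psum (interleave f g) N = psum f (Nat.div2 (S N)) + psum g (Nat.div2 N).
Proof.
  induction N as [| N IH]; [simpl; ring |].
  change (psum (interleave f g) N + interleave f g N
          = psum f (S (Nat.div2 N)) + psum g (Nat.div2 (S N))).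
  rewrite IH; unfold interleave; destruct (Nat.even N) eqn:hN.
  - rewrite <- (Nat.Even_div2 N) by now apply Nat.even_spec.
    simpl; ring.
  - rewrite <- (Nat.Odd_div2 N) by (apply Nat.odd_spec; now rewrite <- Nat.negb_even, hN).
    simpl; ring.
Qed.

Lemma filterlim_div2 (m : nat) : filterlim (fun n => Nat.div2 (m + n)) eventually eventually.
Proof.
  intros P [N hN]; exists (2 * N)%nat; intros n hn.
  apply hN, Nat.div2_le_lower_bound; lia.
Qed.

Lemma comb_succ (p : seqR) (x : nat -> seqR) (alpha : nat -> R) (N : nat) (j : nat) :
  comb p x alpha (S N) j = comb p x alpha N j + alpha N * (x N j - p j).
Proof. unfold comb; simpl; ring. Qed.

Lemma inMa_comb (a p : seqR) (x : nat -> seqR) (alpha : nat -> R) (N : nat) :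
  inMa a p -> (forall k, (k < N)%nat -> inMa a (x k)) -> inMa a (comb p x alpha N).
Proof.
  intros hp; induction N as [| N IH]; intros hx.
  - apply (mem_ext _ p); trivial. intro j; unfold comb; simpl; ring.
  - apply (mem_ext _ (fun j => 1 * comb p x alpha N j + alpha N * sub_seq (x N) p j)).
    + intro j; rewrite comb_succ; unfold sub_seq; ring.
    + apply inMa_lincomb; [apply IH; auto | apply inMa_sub; auto].
Qed.

Lemma comb_scal (p : seqR) (x : nat -> seqR) (alpha : nat -> R) (c : R) (N : nat) :
  comb p x (fun k => c * alpha k) N = homothety p c (comb p x alpha N).
Proof.
  apply functional_extensionality; intro j; unfold comb, homothety.
  rewrite (psum_ext _ (fun k => c * (alpha k * (x k j - p j)))) by (intros; ring).
  rewrite psum_scal; ring.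
Qed.

Lemma comb_pad (p : seqR) (x : nat -> seqR) (alpha : nat -> R) (N M : nat) : (N <= M)%nat ->
  comb p (fun k => if (k <? N)%nat then x k else p) alpha M = comb p x alpha N.
Proof.
  intros hNM; apply functional_extensionality; intro j.
  induction hNM as [| M hNM IH].
  - unfold comb; f_equal; apply psum_ext; intros k hk.
    now rewrite (proj2 (Nat.ltb_lt k N) hk).
  - rewrite comb_succ, IH.
    replace (M <? N)%nat with false by (symmetry; apply Nat.ltb_ge; lia); ring.
Qed.

Lemma comb_interleave (p : seqR) (x y : nat -> seqR) (alpha beta : nat -> R) (N : nat) (j : nat) :
  comb p (interleave x y) (interleave alpha beta) N j
  = comb p x alpha (Nat.div2 (S N)) j + comb p y beta (Nat.div2 N) j - p j.
Proof.
  unfold comb.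
  rewrite (psum_ext _ (interleave (fun k => alpha k * (x k j - p j))
                                  (fun k => beta k * (y k j - p j)))).
  - rewrite psum_interleave; ring.
  - intros k _; unfold interleave; now destruct (Nat.even k).
Qed.

(* Any factor above ||w - p||_a / rho would do; the + 1 keeps it positive when w = p. *)
Definition shrink_factor (a p w : seqR) (rho : R) : R := (norm_a a (sub_seq w p) + 1) / rho.

Definition shrink (a p w : seqR) (rho : R) : seqR := homothety p (/ shrink_factor a p w rho) w.

Lemma shrink_factor_pos (a p w : seqR) (rho : R) : 0 < rho -> 0 < shrink_factor a p w rho.
Proof.
  intros hrho; pose proof (norm_a_ge_0 a (sub_seq w p)).
  apply Rdiv_lt_0_compat; lra.
Qed.

Lemma norm_a_shrink_lt (a p w : seqR) (rho : R) : 0 < rho ->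
  norm_a a (sub_seq (shrink a p w rho) p) < rho.
Proof.
  intros hrho; pose proof (shrink_factor_pos a p w rho hrho).
  unfold shrink; rewrite norm_a_homothety, Rabs_pos_eq by (left; now apply Rinv_0_lt_compat).
  unfold shrink_factor; pose proof (norm_a_ge_0 a (sub_seq w p)).
  set (d := norm_a a (sub_seq w p)) in *.
  replace (/ ((d + 1) / rho) * d) with (rho - rho / (d + 1)) by (field; lra).
  assert (0 < rho / (d + 1)) by (apply Rdiv_lt_0_compat; lra).
  lra.
Qed.

Lemma homothety_shrink (a p w : seqR) (rho : R) : 0 < rho ->
  homothety p (shrink_factor a p w rho) (shrink a p w rho) = w.
Proof.
  intros hrho; pose proof (shrink_factor_pos a p w rho hrho).
  apply functional_extensionality; intro j; unfold shrink, homothety; field; lra.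
Qed.

Definition GS_limit (a : seqR) (A : setR) (p y : seqR) : Prop :=
  exists (x : nat -> seqR) (alpha : nat -> R), (forall k, A (x k)) /\
    is_lim_seq (fun N => norm_a a (sub_seq (comb p x alpha N) y)) 0.

Lemma GS_single (a : seqR) (A : setR) (p z : seqR) (c : R) :
  A z -> inMa a (homothety p c z) -> GS a A p (homothety p c z).
Proof.
  intros hz hy; split; [trivial | left].
  exists 1%nat, (fun _ => z), (fun _ => c); split; [auto |].
  apply functional_extensionality; intro j; unfold comb, homothety; simpl; ring.
Qed.

Lemma Lambda_mono (A B : setR) (i : nat) : subset A B -> Lambda A i -> Lambda B i.
Proof. intros hAB [x [alpha [hx [halpha hx']]]]; exists x, alpha; auto. Qed.

Section GS_theory.

Variables (a : seqR) (A : setR) (p : seqR).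
Hypothesis hAp : A p.
Hypothesis hAMa : forall x, A x -> inMa a x.

Lemma subset_GS : subset A (GS a A p).
Proof.
  intros z hz; apply (mem_ext _ (homothety p 1 z)).
  - intro j; unfold homothety; ring.
  - apply GS_single; [trivial | apply inMa_homothety; auto].
Qed.

Lemma GS_p : GS a A p p.
Proof. exact (subset_GS p hAp). Qed.

Lemma GS_iff_limit (y : seqR) : GS a A p y <-> inMa a y /\ GS_limit a A p y.
Proof.
  split.
  - intros [hy [[N [x [alpha [hx ->]]]] | hlim]]; split; trivial.
    exists (fun k => if (k <? N)%nat then x k else p), alpha; split.
    + intro k; destruct (Nat.ltb_spec k N); auto.
    + apply (is_lim_seq_ext_loc (fun _ => 0)); [| apply is_lim_seq_const].
      exists N; intros M hM; now rewrite comb_pad, norm_a_sub_diag.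
  - intros [hy hlim]; split; [trivial | now right].
Qed.

Lemma GS_homothety (c : R) (y : seqR) : GS a A p y -> GS a A p (homothety p c y).
Proof.
  rewrite !GS_iff_limit; intros [hy [x [alpha [hx hlim]]]].
  split; [apply inMa_homothety; auto |].
  exists x, (fun k => c * alpha k); split; [trivial |].
  apply (is_lim_seq_ext (fun N => Rabs c * norm_a a (sub_seq (comb p x alpha N) y))).
  - intro N; rewrite comb_scal, <- norm_a_scal; f_equal.
    apply functional_extensionality; intro j; unfold sub_seq, homothety; ring.
  - replace (Finite 0) with (Rbar_mult (Rabs c) 0) by (simpl; f_equal; ring).
    now apply is_lim_seq_scal_l.
Qed.

Lemma GS_add (y z : seqR) : GS a A p y -> GS a A p z -> GS a A p (fun j => y j + z j - p j).
Proof.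
  rewrite !GS_iff_limit; intros [hy [x [alpha [hx hlx]]]] [hz [w [beta [hw hlw]]]].
  split.
  - apply (mem_ext _ (fun j => 1 * (1 * y j + 1 * z j) + (-1) * p j)); [intro; ring |].
    apply inMa_lincomb; [apply inMa_lincomb |]; auto.
  - exists (interleave x w), (interleave alpha beta); split.
    + intro k; unfold interleave; now destruct (Nat.even k).
    + set (u := fun N => norm_a a (sub_seq (comb p x alpha N) y)).
      set (v := fun N => norm_a a (sub_seq (comb p w beta N) z)).
      apply is_lim_seq_le_le with (u := fun _ => 0)
        (w := fun N => 2 * (u (Nat.div2 (S N)) + v (Nat.div2 N))).
      * intro N; split; [apply norm_a_ge_0 |].
        replace (sub_seq _ _) with (fun j => sub_seq (comb p x alpha (Nat.div2 (S N))) y j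
                                           + sub_seq (comb p w beta (Nat.div2 N)) z j).
        -- apply norm_a_add_le; apply inMa_sub; auto; apply inMa_comb; auto.
        -- apply functional_extensionality; intro j.
           unfold sub_seq; rewrite comb_interleave; ring.
      * apply is_lim_seq_const.
      * replace (Finite 0) with (Rbar_mult 2 (0 + 0)) by (simpl; f_equal; ring).
        apply is_lim_seq_scal_l, is_lim_seq_plus'.
        -- exact (is_lim_seq_subseq u 0 (fun n => Nat.div2 (S n)) (filterlim_div2 1) hlx).
        -- exact (is_lim_seq_subseq v 0 Nat.div2 (filterlim_div2 0) hlw).
Qed.

Lemma GS_sub (y z : seqR) : GS a A p y -> GS a A p z -> GS a A p (fun j => y j - z j + p j).
Proof.
  intros hy hz; apply (mem_ext _ (fun j => y j + homothety p (-1) z j - p j)).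
  - intro j; unfold homothety; ring.
  - apply GS_add; [| apply GS_homothety]; trivial.
Qed.

Lemma GS_translate_is_subspace : translate_is_subspace (GS a A p) p.
Proof.
  split; [| split].
  - exists p; split; [exact GS_p |].
    apply functional_extensionality; intro; unfold sub_seq; ring.
  - intros u v [y [hy ->]] [z [hz ->]]; exists (fun j => y j + z j - p j).
    split; [now apply GS_add |].
    apply functional_extensionality; intro; unfold sub_seq; ring.
  - intros c u [y [hy ->]]; exists (homothety p c y); split; [now apply GS_homothety |].
    apply functional_extensionality; intro; unfold sub_seq, homothety; ring.
Qed.

Lemma GS_comb (x : nat -> seqR) (alpha : nat -> R) (N : nat) :
  (forall k, (k < N)%nat -> GS a A p (x k)) -> GS a A p (comb p x alpha N).
Proof.
  induction N as [| N IH]; intros hx.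
  - apply (mem_ext _ p); [intro j; unfold comb; simpl; ring | exact GS_p].
  - apply (mem_ext _ (fun j => comb p x alpha N j + homothety p (alpha N) (x N) j - p j)).
    + intro j; rewrite comb_succ; unfold homothety; ring.
    + apply GS_add; [apply IH; auto | apply GS_homothety, hx; lia].
Qed.

Lemma GS_shrink_ball (w : seqR) (rho : R) : 0 < rho -> GS a A p w ->
  inter (GS a A p) (ball_a a p rho) (shrink a p w rho).
Proof.
  intros hrho hw; assert (hs : GS a A p (shrink a p w rho)) by now apply GS_homothety.
  split; [trivial | split; [exact (proj1 hs) | now apply norm_a_shrink_lt]].
Qed.

Lemma GS_subset_GS_ball (rho : R) : 0 < rho ->
  subset (GS a A p) (GS a (inter (GS a A p) (ball_a a p rho)) p).
Proof.
  intros hrho y hy; rewrite <- (homothety_shrink a p y rho hrho).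
  apply GS_single; [now apply GS_shrink_ball |].
  rewrite homothety_shrink by trivial; exact (proj1 hy).
Qed.

Lemma GS_subset_closure (B : setR) :
  subset B (GS a A p) -> subset (GS a B p) (closure_a a (GS a A p)).
Proof.
  intros hB y [hy hrep]; split; [trivial |]; intros eps heps.
  destruct hrep as [[N [x [alpha [hx ->]]]] | [x [alpha [hx hlim]]]].
  - exists (comb p x alpha N); split; [apply GS_comb; auto | now rewrite norm_a_sub_diag].
  - apply is_lim_seq_spec in hlim; destruct (hlim (mkposreal eps heps)) as [N hN].
    exists (comb p x alpha N); split; [apply GS_comb; auto |].
    specialize (hN N (le_n N)); simpl in hN; rewrite Rminus_0_r in hN.
    exact (Rle_lt_trans _ _ _ (Rle_abs _) hN).
Qed.

Lemma GS_ball_of_limit (rho : R) (z : nat -> seqR) (y : seqR) :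
  0 < rho -> inMa a y -> (forall k, GS a A p (z k)) ->
  is_lim_seq (fun k => norm_a a (sub_seq (z k) y)) 0 ->
  GS a (inter (GS a A p) (ball_a a p rho)) p y.
Proof.
  intros hrho hy hz hlim.
  set (z' := fun k => match k with O => p | S k => z k end).
  set (w := fun k j => z' (S k) j - z' k j + p j).
  assert (hw : forall k, GS a A p (w k)).
  { intro k; apply GS_sub; [apply hz |]; destruct k; [exact GS_p | apply hz]. }
  split; [trivial | right].
  exists (fun k => shrink a p (w k) rho), (fun k => shrink_factor a p (w k) rho); split.
  - intro k; now apply GS_shrink_ball.
  - assert (hcomb : forall N,
      comb p (fun k => shrink a p (w k) rho) (fun k => shrink_factor a p (w k) rho) N = z' N).
    { intro N; apply functional_extensionality; intro j; unfold comb.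
      rewrite (psum_ext _ (fun k => z' (S k) j - z' k j)), (psum_telescope (fun k => z' k j));
        [simpl; ring |].
      intros k _; pose proof (f_equal (fun f => f j) (homothety_shrink a p (w k) rho hrho)) as hk.
      unfold homothety in hk; change (w k j) with (z' (S k) j - z' k j + p j) in hk; lra. }
    apply is_lim_seq_incr_1.
    apply (is_lim_seq_ext (fun N => norm_a a (sub_seq (z N) y))); [| exact hlim].
    intro N; now rewrite hcomb.
Qed.

Lemma closure_subset_GS_ball (rho : R) : 0 < rho ->
  subset (closure_a a (GS a A p)) (GS a (inter (GS a A p) (ball_a a p rho)) p).
Proof.
  intros hrho y [hy hcl].
  destruct (functional_choice (fun k z => GS a A p z /\ norm_a a (sub_seq z y) < (/ 2) ^ k))
    as [z hz].
  { intro k; apply hcl, pow_lt; lra. }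
  apply (GS_ball_of_limit rho z); [trivial | trivial | intro k; apply hz |].
  apply is_lim_seq_le_le with (u := fun _ => 0) (w := fun k => (/ 2) ^ k).
  - intro k; split; [apply norm_a_ge_0 | left; apply hz].
  - apply is_lim_seq_const.
  - apply is_lim_seq_geom; rewrite Rabs_pos_eq; lra.
Qed.

Lemma GS_ball_eq_closure (rho : R) : 0 < rho ->
  set_eq (GS a (inter (GS a A p) (ball_a a p rho)) p) (closure_a a (GS a A p)).
Proof.
  intros hrho y; split.
  - apply GS_subset_closure; now intros x [hx _].
  - now apply closure_subset_GS_ball.
Qed.

Lemma Lambda_GS_ball (rho : R) (i : nat) : 0 < rho ->
  Lambda (GS a A p) i -> Lambda (inter (GS a A p) (ball_a a p rho)) i.
Proof.
  intros hrho [x [alpha [hx [halpha hx']]]].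
  set (x' := fun j => x j + alpha * e_ i j) in hx'.
  pose proof (norm_a_ge_0 a (sub_seq x p)) as hd1; pose proof (norm_a_ge_0 a (sub_seq x' p)) as hd2.
  set (D := norm_a a (sub_seq x p) + norm_a a (sub_seq x' p)).
  set (t := rho / (D + 1)).
  assert (ht : 0 < t) by (apply Rdiv_lt_0_compat; unfold D; lra).
  assert (htD : t * (D + 1) = rho) by (unfold t; field; unfold D; lra).
  assert (hball : forall y, GS a A p y -> norm_a a (sub_seq y p) <= D ->
                  inter (GS a A p) (ball_a a p rho) (homothety p t y)).
  { intros y hy hyD; assert (hs := GS_homothety t y hy).
    split; [trivial | split; [exact (proj1 hs) |]].
    rewrite norm_a_homothety, Rabs_pos_eq by lra.
    pose proof (norm_a_ge_0 a (sub_seq y p)); nra. }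
  exists (homothety p t x), (t * alpha); split; [| split].
  - apply hball; [trivial | unfold D; lra].
  - apply Rmult_integral_contrapositive; split; lra.
  - apply (mem_ext _ (homothety p t x')).
    + intro j; unfold homothety, x'; ring.
    + apply hball; [trivial | unfold D; lra].
Qed.

End GS_theory.

Theorem lemma3p13 (a : nat -> R) (E : (nat -> R) -> Prop) (p : nat -> R) (r : nat -> R)
  (ha_pos : forall i, 0 < a i)
  (ha_sum : ex_series (fun i => (a i)^2))
  (hE_Ma : forall x, E x -> inMa a x)
  (hE_ne : exists x, E x)
  (hE_bdd : exists M, forall x, E x -> norm_a a x <= M)
  (hp : E p)
  (hr : forall n, 0 < r n)
  (hEsub : forall n, subset E (inter (GSn a E p r n) (ball_a a p (r n)))) :
  (forall n, (1 <= n)%nat -> translate_is_subspace (GSn a E p r n) p) /\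
  (forall n, (1 <= n)%nat -> subset (GSn a E p r (n - 1)) (GSn a E p r n)) /\
  set_eq (GSn a E p r 2) (closure_a a (GS a E p)) /\
  (forall n, (1 <= n)%nat ->
     forall i, Lambda (GSn a E p r n) i <-> Lambda (inter (GSn a E p r n) (ball_a a p (r n))) i).
Proof.
  assert (hball_p : forall m, inter (GSn a E p r m) (ball_a a p (r m)) p)
    by (intro m; now apply hEsub).
  assert (hball_Ma : forall m x, inter (GSn a E p r m) (ball_a a p (r m)) x -> inMa a x)
    by (intros m x [_ [hx _]]; exact hx).
  split; [| split; [| split]].
  - intros [| m] hm; [lia |].
    exact (GS_translate_is_subspace a _ p (hball_p m) (hball_Ma m)).
  - intros [| [| m]] hm; [lia | |].
    + intros x hx; exact (subset_GS a _ p (hball_p O) (hball_Ma O) x (hEsub O x hx)).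
    + replace (S (S m) - 1)%nat with (S m) by lia.
      exact (GS_subset_GS_ball a _ p (hball_p m) (hball_Ma m) (r (S m)) (hr (S m))).
  - change (GSn a E p r 2)
      with (GS a (inter (GS a (inter E (ball_a a p (r O))) p) (ball_a a p (r 1%nat))) p).
    rewrite (inter_eq_l E (ball_a a p (r O))) by (intros x hx; apply (hEsub O x hx)).
    exact (GS_ball_eq_closure a E p hp hE_Ma (r 1%nat) (hr 1%nat)).
  - intros [| m] hm i; [lia |]; split.
    + exact (Lambda_GS_ball a _ p (hball_p m) (hball_Ma m) (r (S m)) i (hr (S m))).
    + apply Lambda_mono; now intros x [hx _].
Qed.
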